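(* Uniformly in any linear ordering $R=(A,<_R)$ (with $A\subseteq\mathbb{N}$), one may compute a tree $T_R\subseteq2^{<\omega}$ and a labeling function $l_R:A\to T_R$ such that: (1) for each $\sigma\in T_R$, the last bit of $\sigma$ is $0$ if and only if $\sigma=l_R(a)$ for some $a\in A$; (2) for each $a\in A$, $l_R(a)^\frown\overline1\in[T_R]$; (3) for each $a,b\in A$, $a<_R b$ if and only if $l_R(a)^\frown\overline1<l_R(b)^\frown\overline1$; (4) if $X\in[T_R]$, then $X=l_R(a)^\frown\overline1$ for some $a\in A$ if and only if $X$ has a successor (an immediate successor in the order) in $[T_R]$; (5) the order type of $[T_R]$ depends only on the order type of $R$; (6) two linear orders $R$ and $S$ are isomorphic if and only if $[T_R]$ and $[T_S]$ are order isomorphic.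
   Context: A tree is a subset of $2^{<\omega}$ (finite binary strings) closed under initial segments; $[T]$ is the set of $X\in2^\omega$ all of whose finite initial segments lie in $T$, ordered lexicographically: $X<Y$ iff $X\neq Y$ and $X(n)<Y(n)$ at the first $n$ where they differ. For a finite string $\sigma$, $\sigma^\frown\overline1$ is the infinite sequence consisting of $\sigma$ followed by all $1$'s. A linear ordering $R=(A,<_R)$ is given by its code $\{\langle a,b\rangle: a,b\in A,\ a<_R b\}\subseteq\mathbb{N}$; ''uniformly compute'' means a single oracle algorithm computes (the codes of) $T_R$ and $l_R$ from the code of $R$. *)

From mathcomp Require Import all_boot.
Set Implicit Arguments. Unset Strict Implicit. Unset Printing Implicit Defensive.

Inductive rf : Type :=
| rf_zero : rf
| rf_succ : rf
| rf_proj : nat -> rf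
| rf_oracle : rf
| rf_comp : rf -> seq rf -> rf
| rf_prec : rf -> rf -> rf
| rf_mu : rf -> rf.

Inductive eval (o : nat -> bool) : rf -> seq nat -> nat -> Prop :=
| ev_zero xs : eval o rf_zero xs 0
| ev_succ x xs : eval o rf_succ (x :: xs) x.+1
| ev_proj i xs : i < size xs -> eval o (rf_proj i) xs (nth 0 xs i)
| ev_oracle x xs : eval o rf_oracle (x :: xs) (nat_of_bool (o x))
| ev_comp f gs xs ys y :
    evals o gs xs ys -> eval o f ys y -> eval o (rf_comp f gs) xs y
| ev_prec0 g h xs y : eval o g xs y -> eval o (rf_prec g h) (0 :: xs) y
| ev_precS g h n xs z y :
    eval o (rf_prec g h) (n :: xs) z -> eval o h (n :: z :: xs) y ->
    eval o (rf_prec g h) (n.+1 :: xs) y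
| ev_mu f xs n :
    eval o f (n :: xs) 0 ->
    (forall m, m < n -> exists k, eval o f (m :: xs) k.+1) ->
    eval o (rf_mu f) xs n
with evals (o : nat -> bool) : seq rf -> seq nat -> seq nat -> Prop :=
| evs_nil xs : evals o [::] xs [::]
| evs_cons g gs xs y ys :
    eval o g xs y -> evals o gs xs ys -> evals o (g :: gs) xs (y :: ys).

Definition cpair (a b : nat) : nat := 'C(a + b + 1, 2) + b.

(* Bijective coding of finite binary strings by natural numbers. *)
Fixpoint code_str (s : seq bool) : nat :=
  match s with
  | [::] => 0
  | b :: s' => (code_str s').*2 + (1 + nat_of_bool b)
  end.

(* o is the oracle presenting the linear ordering R = (A, lt): the even queries
   give A, the odd queries give the code {<a,b> : a,b in A, a <_R b}. *)
Definition presents (o : nat -> bool) (A : pred nat) (lt : rel nat) : Prop :=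
  (forall n, o n.*2 = A n) /\
  (forall a b, o (cpair a b).*2.+1 = [&& A a, A b & lt a b]).

Definition linear_order (A : pred nat) (lt : rel nat) : Prop :=
  (forall a, A a -> ~~ lt a a) /\
  (forall a b c, A a -> A b -> A c -> lt a b -> lt b c -> lt a c) /\
  (forall a b, A a -> A b -> a != b -> lt a b || lt b a).

Definition is_tree (T : seq bool -> Prop) : Prop :=
  forall s n, T s -> T (take n s).

Definition body (T : seq bool -> Prop) (X : nat -> bool) : Prop :=
  forall n, T (mkseq X n).

Definition lexlt (X Y : nat -> bool) : Prop :=
  exists n, (forall m, m < n -> X m = Y m) /\ X n = false /\ Y n = true.

Definition ext1 (s : seq bool) : nat -> bool :=
  fun n => if n < size s then nth false s n else true.

Definition has_successor_in (P : (nat -> bool) -> Prop) (X : nat -> bool) : Prop :=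
  exists Y, P Y /\ lexlt X Y /\ ~ (exists Z, P Z /\ lexlt X Z /\ lexlt Z Y).

Definition order_iso {U V : Type} (P : U -> Prop) (ltP : U -> U -> Prop)
    (Q : V -> Prop) (ltQ : V -> V -> Prop) : Prop :=
  exists f : U -> V,
    (forall x, P x -> Q (f x)) /\
    (forall y, Q y -> exists x, P x /\ f x = y) /\
    (forall x y, P x -> P y -> (ltP x y <-> ltQ (f x) (f y))).

Definition lin_iso (A : pred nat) (lt : rel nat) (B : pred nat) (lt' : rel nat) :=
  order_iso (fun a => A a) (fun a b => lt a b) (fun b => B b) (fun a b => lt' a b).

Definition tree_of (eT : rf) (o : nat -> bool) : seq bool -> Prop :=
  fun s => eval o eT [:: code_str s] 1.

From Stdlib Require Import ClassicalEpsilon FunctionalExtensionality PropExtensionality.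
From mathcomp Require Import all_boot.
Set Implicit Arguments. Unset Strict Implicit. Unset Printing Implicit Defensive.

(* For a final segment C of R (an upward closed subset of A) let X_C be the
   sequence with X_C(n) = 0 iff n is a record of C: n lies in C and no smaller
   element of C is R-below n.  Strict inclusion of final segments becomes the
   reverse lexicographic order of these sequences.  The label l(a) is X_[a,oo)
   cut at a, so l(a)^111... = X_[a,oo), and T_R consists of the strings each of
   whose zeros, at position i, ends a copy of l(i).  The zeros of a path of T_R
   descend in R; the final segment they generate recovers the path, so [T_R] is
   isomorphic to the final segments of R under reverse inclusion, an invariant
   of the order type of R.  Conversely, the paths with an immediate successor
   are exactly the X_[a,oo), whose successor is X_(a,oo), and these are ordered
   like R, so R is recovered from [T_R].  Membership in T_R and the labels only
   need bounded quantifiers over the oracle, hence are primitive recursive. *)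

(** * Mu-free programs *)

(* A total interpreter for mu-free programs; on [rf_mu] and on argument lists
   that are too short it returns junk, which [prim] rules out. *)
Fixpoint run (o : nat -> bool) (e : rf) (xs : seq nat) : nat :=
  match e with
  | rf_zero => 0
  | rf_succ => (head 0 xs).+1
  | rf_proj i => nth 0 xs i
  | rf_oracle => o (head 0 xs)
  | rf_comp f gs => run o f [seq run o g xs | g <- gs]
  | rf_prec g h =>
      if xs is n :: xs' then
        nat_rect (fun _ => nat) (run o g xs') (fun k z => run o h [:: k, z & xs']) n
      else 0
  | rf_mu _ => 0
  end.

Fixpoint prim (n : nat) (e : rf) : bool :=
  match e with
  | rf_zero => true
  | rf_succ | rf_oracle => 0 < n
  | rf_proj i => i < n
  | rf_comp f gs => all (prim n) gs && prim (size gs) f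
  | rf_prec g h => [&& 0 < n, prim n.-1 g & prim n.+1 h]
  | rf_mu _ => false
  end.

Fixpoint all_rf (P : rf -> Prop) (gs : seq rf) : Prop :=
  if gs is g :: gs' then P g /\ all_rf P gs' else True.

Section NestedInduction.
Variable P : rf -> Prop.
Hypothesis P_zero : P rf_zero.
Hypothesis P_succ : P rf_succ.
Hypothesis P_proj : forall i, P (rf_proj i).
Hypothesis P_oracle : P rf_oracle.
Hypothesis P_comp : forall f gs, P f -> all_rf P gs -> P (rf_comp f gs).
Hypothesis P_prec : forall g h, P g -> P h -> P (rf_prec g h).
Hypothesis P_mu : forall f, P f -> P (rf_mu f).

Fixpoint rf_nested_ind (e : rf) : P e :=
  match e with
  | rf_zero => P_zero
  | rf_succ => P_succ
  | rf_proj i => P_proj i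
  | rf_oracle => P_oracle
  | rf_comp f gs => P_comp (rf_nested_ind f)
      ((fix all_ind gs : all_rf P gs :=
          if gs is g :: gs' then conj (rf_nested_ind g) (all_ind gs') else I) gs)
  | rf_prec g h => P_prec (rf_nested_ind g) (rf_nested_ind h)
  | rf_mu f => P_mu (rf_nested_ind f)
  end.
End NestedInduction.

Lemma eval_run o e xs : prim (size xs) e -> eval o e xs (run o e xs).
Proof.
elim/rf_nested_ind: e xs => [|||| f gs IHf IHgs | g h IHg IHh | //] xs /=.
- by constructor.
- by case: xs => // x xs _; constructor.
- by constructor.
- by case: xs => // x xs _; constructor.
- case/andP=> Hgs Hf; apply: ev_comp (IHf _ _); last by rewrite size_map.
  elim: gs IHgs Hgs {Hf} => [|g gs IH] /=; first by constructor.
  by case=> IHg IHgs /andP[Hg Hgs]; constructor; [apply: IHg | apply: IH].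
- case: xs => [|n xs] //= /andP[Hg Hh].
  elim: n => [|n IHn] /=; first by constructor; apply: IHg.
  by apply: ev_precS IHn (IHh _ _).
Qed.

Scheme eval_mut := Induction for eval Sort Prop
  with evals_mut := Induction for evals Sort Prop.

Lemma eval_functional_run o e xs y :
  eval o e xs y -> prim (size xs) e -> y = run o e xs.
Proof.
move=> H; pattern e, xs, y, H.
apply: (@eval_mut o (fun e xs y _ => prim (size xs) e -> y = run o e xs)
  (fun gs xs ys _ => all (prim (size xs)) gs -> ys = [seq run o g xs | g <- gs])) => //=.
- move=> f gs xs' ys y' _ IHgs _ IHf /andP[Hgs Hf].
  by rewrite (IHgs Hgs) in IHf *; apply: IHf; rewrite size_map.
- by move=> g h xs' y' _ IH /andP[Hg _]; apply: IH.
- move=> g h n xs' z y' _ IH1 _ IH2 Hw.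
  by case/andP: (Hw) => _ Hh; rewrite (IH2 Hh) (IH1 Hw).
- by move=> g gs xs' y' ys _ IH1 _ IH2 /andP[H1 H2]; rewrite -IH1 // -IH2.
Qed.

Lemma evalE o e xs y : prim (size xs) e -> eval o e xs y <-> y = run o e xs.
Proof.
by move=> He; split=> [H|->]; [apply: eval_functional_run | apply: eval_run].
Qed.

Definition Arg i := rf_proj i.
Fixpoint Const n := if n is n'.+1 then rf_comp rf_succ [:: Const n'] else rf_zero.
Definition Succ e := rf_comp rf_succ [:: e].
Definition Query e := rf_comp rf_oracle [:: e].
(* Recursion on the value of [ne], with the [m] current arguments as parameters. *)
Definition Rec m ne e0 step := rf_comp (rf_prec e0 step) (ne :: mkseq rf_proj m).

Lemma run_Arg o i xs : run o (Arg i) xs = nth 0 xs i.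
Proof. by []. Qed.

Lemma run_Const o n xs : run o (Const n) xs = n.
Proof. by elim: n => //= n ->. Qed.

Lemma run_Succ o e xs : run o (Succ e) xs = (run o e xs).+1.
Proof. by []. Qed.

Lemma run_Query o e xs : run o (Query e) xs = o (run o e xs).
Proof. by []. Qed.

Lemma run_Rec o m ne e0 step xs : size xs = m ->
  run o (Rec m ne e0 step) xs =
  nat_rect (fun _ => nat) (run o e0 xs) (fun k z => run o step [:: k, z & xs])
    (run o ne xs).
Proof.
by move=> <-; rewrite /Rec /= -map_comp -/(mkseq _ _) mkseq_nth.
Qed.
Opaque Arg Const Succ Query Rec.

Definition Add e1 e2 := rf_comp (Rec 2 (Arg 0) (Arg 1) (Succ (Arg 1))) [:: e1; e2].
Lemma run_Add o e1 e2 xs : run o (Add e1 e2) xs = run o e1 xs + run o e2 xs.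
Proof.
rewrite /= run_Rec // !run_Arg /=.
by elim: (run o e1 xs) => //= n ->; rewrite run_Succ run_Arg.
Qed.
Opaque Add.

Definition Mul e1 e2 := rf_comp (Rec 2 (Arg 0) (Const 0) (Add (Arg 1) (Arg 3))) [:: e1; e2].
Lemma run_Mul o e1 e2 xs : run o (Mul e1 e2) xs = run o e1 xs * run o e2 xs.
Proof.
rewrite /= run_Rec // !run_Arg run_Const /=.
by elim: (run o e1 xs) => //= n ->; rewrite run_Add !run_Arg /= mulSn addnC.
Qed.
Opaque Mul.

Definition Pred e := rf_comp (Rec 1 (Arg 0) (Const 0) (Arg 0)) [:: e].
Lemma run_Pred o e xs : run o (Pred e) xs = (run o e xs).-1.
Proof. by rewrite /= run_Rec // !run_Arg run_Const /=; case: (run o e xs). Qed.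
Opaque Pred.

Definition Sub e1 e2 := rf_comp (Rec 2 (Arg 1) (Arg 0) (Pred (Arg 1))) [:: e1; e2].
Lemma run_Sub o e1 e2 xs : run o (Sub e1 e2) xs = run o e1 xs - run o e2 xs.
Proof.
rewrite /= run_Rec // !run_Arg /=.
by elim: (run o e2 xs) => /= [|n ->]; rewrite ?subn0 // run_Pred run_Arg /= subnS.
Qed.
Opaque Sub.

Definition IsZero e := rf_comp (Rec 1 (Arg 0) (Const 1) (Const 0)) [:: e].
Lemma run_IsZero o e xs : run o (IsZero e) xs = (run o e xs == 0).
Proof. by rewrite /= run_Rec // !run_Arg run_Const /=; case: (run o e xs). Qed.
Opaque IsZero.

Definition Odd e := rf_comp (Rec 1 (Arg 0) (Const 0) (IsZero (Arg 1))) [:: e].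
Lemma run_Odd o e xs : run o (Odd e) xs = odd (run o e xs).
Proof.
rewrite /= run_Rec // !run_Arg run_Const /=.
by elim: (run o e xs) => //= n ->; rewrite run_IsZero run_Arg /=; case: (odd n).
Qed.
Opaque Odd.

Definition Half e := rf_comp (Rec 1 (Arg 0) (Const 0) (Add (Arg 1) (Odd (Arg 0)))) [:: e].
Lemma run_Half o e xs : run o (Half e) xs = (run o e xs)./2.
Proof.
rewrite /= run_Rec // !run_Arg run_Const /=.
elim: (run o e xs) => //= n ->; rewrite run_Add run_Odd !run_Arg /=.
by rewrite uphalf_half addnC.
Qed.
Opaque Half.

Definition Pow2 e := rf_comp (Rec 1 (Arg 0) (Const 1) (Add (Arg 1) (Arg 1))) [:: e].
Lemma run_Pow2 o e xs : run o (Pow2 e) xs = 2 ^ run o e xs.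
Proof.
rewrite /= run_Rec // run_Arg run_Const /=.
by elim: (run o e xs) => //= n ->; rewrite run_Add !run_Arg /= expnS mul2n addnn.
Qed.
Opaque Pow2.

Definition Binom2 e := rf_comp (Rec 1 (Arg 0) (Const 0) (Add (Arg 1) (Arg 0))) [:: e].
Lemma run_Binom2 o e xs : run o (Binom2 e) xs = 'C(run o e xs, 2).
Proof.
rewrite /= run_Rec // run_Arg run_Const /=.
by elim: (run o e xs) => //= n ->; rewrite run_Add !run_Arg /= binS bin1.
Qed.
Opaque Binom2.

Definition Pair e1 e2 := Add (Binom2 (Succ (Add e1 e2))) e2.
Lemma run_Pair o e1 e2 xs : run o (Pair e1 e2) xs = cpair (run o e1 xs) (run o e2 xs).
Proof. by rewrite run_Add run_Binom2 run_Succ run_Add /cpair addn1. Qed.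
Opaque Pair.

Definition Not e := IsZero e.
Definition And e1 e2 := Mul e1 e2.
Definition Imp e1 e2 := IsZero (IsZero (Add (IsZero e1) e2)).
Definition Eqn e1 e2 := IsZero (Add (Sub e1 e2) (Sub e2 e1)).

Section BooleanPrograms.
Variables (o : nat -> bool) (xs : seq nat) (e1 e2 : rf) (b1 b2 : bool).
Hypotheses (run_e1 : run o e1 xs = b1) (run_e2 : run o e2 xs = b2).

Lemma run_Not : run o (Not e1) xs = ~~ b1.
Proof. by rewrite run_IsZero run_e1; case: b1. Qed.

Lemma run_And : run o (And e1 e2) xs = b1 && b2.
Proof. by rewrite run_Mul run_e1 run_e2; case: b1; case: b2. Qed.

Lemma run_Imp : run o (Imp e1 e2) xs = (b1 ==> b2).
Proof. by rewrite !run_IsZero run_Add run_IsZero run_e1 run_e2; case: b1; case: b2. Qed.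
End BooleanPrograms.

Lemma run_Eqn o e1 e2 xs : run o (Eqn e1 e2) xs = (run o e1 xs == run o e2 xs).
Proof. by rewrite run_IsZero run_Add !run_Sub addn_eq0 !subn_eq0 -eqn_leq. Qed.
Opaque Not And Imp Eqn.

(* [AllBelow m ne body] tests [body] for all [k < ne]; [body] sees [k] as
   argument 0 and the [m] parameters from argument 2 on. *)
Definition AllBelow m ne body := Rec m ne (Const 1) (And (Arg 1) body).
Lemma run_AllBelow o m ne body xs (p : pred nat) : size xs = m ->
  (forall k z, run o body [:: k, z & xs] = p k) ->
  run o (AllBelow m ne body) xs = all p (iota 0 (run o ne xs)).
Proof.
move=> Hm Hbody; rewrite run_Rec // run_Const.
elim: (run o ne xs) => //= n IH.
have run_acc (b : bool) : run o (Arg 1) [:: n, nat_of_bool b & xs] = b by rewrite run_Arg.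
rewrite IH (run_And (run_acc _) (Hbody _ _)).
by rewrite -[_ && all _ _]/(all p (iota 0 n.+1)) -addn1 iotaD all_cat /= andbT.
Qed.
Opaque AllBelow.

(** * Final segments and the tree of labels *)

Lemma take_eq_mkseq (T : eqType) (x0 : T) (s : seq T) (f : nat -> T) n :
  n <= size s -> (take n s == mkseq f n) = all (fun j => nth x0 s j == f j) (iota 0 n).
Proof.
move=> Hn; have size_take_n : size (take n s) = n by rewrite size_take_min (minn_idPl Hn).
apply/eqP/allP => [E j | E].
- by rewrite mem_iota add0n => /andP[_ Hj]; rewrite -(nth_take _ Hj) E nth_mkseq.
- apply: (@eq_from_nth _ x0); first by rewrite size_take_n size_mkseq.
  move=> j; rewrite size_take_n => Hj.
  by rewrite nth_take // nth_mkseq //; apply/eqP/E; rewrite mem_iota.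
Qed.

Lemma finite_witnesses (C : pred nat) (R : nat -> nat -> Prop) :
  (forall x, C x -> exists i, R i x) ->
  forall n, exists N, forall x, x <= n -> C x -> exists2 i, i <= N & R i x.
Proof.
move=> witness; elim=> [|n [N HN]].
  case C0 : (C 0); last by exists 0 => x; rewrite leqn0 => /eqP ->; rewrite C0.
  by have [i Ri] := witness _ C0; exists i => x; rewrite leqn0 => /eqP -> _; exists i.
case Cn : (C n.+1); last first.
  by exists N => x; rewrite leq_eqVlt => /orP[/eqP -> | /HN//]; rewrite Cn.
have [i Ri] := witness _ Cn; exists (maxn N i) => x; rewrite leq_eqVlt.
case/orP=> [/eqP -> _ | /HN HNx /HNx[j Hj Rj]]; first by exists i; rewrite ?leq_maxr.
by exists j; rewrite // (leq_trans Hj) ?leq_maxl.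
Qed.

Lemma lexlt_irr X : ~ lexlt X X.
Proof. by case=> n [_ [->]]. Qed.

Lemma lexlt_asym X Y : lexlt X Y -> ~ lexlt Y X.
Proof.
case=> n [eqXY [Xn Yn]] [m [eqYX [Ym Xm]]].
case: (ltngtP n m) => [/eqYX | /eqXY | eq_nm]; last by move: Xn; rewrite eq_nm Xm.
  by rewrite Xn Yn.
by rewrite Ym Xm.
Qed.

Definition propb (P : Prop) : bool := if excluded_middle_informative P then true else false.

Lemma propbP P : reflect P (propb P).
Proof. by rewrite /propb; case: excluded_middle_informative => H; constructor. Qed.

Definition rel_on (A : pred nat) (lt : rel nat) : rel nat :=
  fun a b => [&& A a, A b & lt a b].

Definition strict_total (A : pred nat) (L : rel nat) : Prop :=
  [/\ forall x y, L x y -> A x && A y, irreflexive L, transitive L &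
      forall x y, A x -> A y -> x != y -> L x y || L y x].

Definition segment_path (L : rel nat) (C : pred nat) (n : nat) : bool :=
  ~~ (C n && all (fun k => C k ==> ~~ L k n) (iota 0 n)).

Definition above (A : pred nat) (L : rel nat) (a : nat) : pred nat :=
  fun x => A x && ~~ L x a.

Definition label_bit A L a := segment_path L (above A L a).

Definition label A L a : seq bool := mkseq (label_bit A L a) a.+1.

Definition label_tree A L (s : seq bool) : bool :=
  all (fun i => nth true s i || A i && (take i.+1 s == label A L i)) (iota 0 (size s)).

Lemma segment_path_ext L C C' n :
  (forall k, k <= n -> C k = C' k) -> segment_path L C n = segment_path L C' n.
Proof.
move=> CC'; rewrite /segment_path CC' //; congr (~~ (_ && _)).
by apply: eq_in_all => k; rewrite mem_iota add0n => /andP[_ /ltnW/CC'->].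
Qed.

Lemma eq_segment_path L C C' : C =1 C' -> segment_path L C = segment_path L C'.
Proof. by move=> CC'; apply: functional_extensionality => n; apply: segment_path_ext. Qed.

Lemma body_label_tree_false A L X i :
  body (label_tree A L) X -> X i = false -> A i /\ forall j, j <= i -> X j = label_bit A L i j.
Proof.
move=> bodyX Xi; have /allP/(_ i) := bodyX i.+1.
rewrite size_mkseq mem_iota add0n ltnSn nth_mkseq // Xi take_oversize ?size_mkseq //.
case/(_ isT)/andP=> Ai /eqP Ei; split=> // j Hj.
by rewrite -(@nth_mkseq _ false X i.+1 j) // Ei nth_mkseq.
Qed.

Lemma label_tree_is_tree A L : is_tree (label_tree A L).
Proof.
move=> s n /allP Ts; apply/allP => i; rewrite mem_iota add0n size_take_min leq_min.
case/andP=> _ /andP[Hin His]; have := Ts i; rewrite mem_iota His nth_take //.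
by case/(_ isT)/orP=> [-> // | /andP[-> /eqP <-]]; rewrite take_takel ?eqxx ?orbT.
Qed.

Section FinalSegments.
Variables (A : pred nat) (L : rel nat).
Hypothesis HL : strict_total A L.

Local Notation above := (above A L).
Local Notation label_bit := (label_bit A L).
Local Notation label := (label A L).
Local Notation spath := (segment_path L).
Local Notation tree := (label_tree A L).

Definition final_segment (C : pred nat) :=
  (forall x, C x -> A x) /\ forall x y, C x -> A y -> L x y -> C y.

Definition leL x y := (x == y) || L x y.

Lemma L_dom x y : L x y -> A x && A y.
Proof. by case: HL => dom _ _ _; apply: dom. Qed.

Lemma L_irr x : L x x = false.
Proof. by case: HL. Qed.

Lemma L_trans x y z : L x y -> L y z -> L x z.
Proof. by case: HL => _ _ tr _ ?; apply: tr. Qed.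

Lemma L_asym x y : L x y -> ~~ L y x.
Proof. by move=> Lxy; apply/negP => /(L_trans Lxy); rewrite L_irr. Qed.

Lemma L_total x y : A x -> A y -> x != y -> L x y || L y x.
Proof. by case: HL => _ _ _; apply. Qed.

Lemma leL_total x y : A x -> A y -> ~~ L y x -> leL x y.
Proof.
move=> Ax Ay nLyx; rewrite /leL; case: eqVneq => //= /(L_total Ax Ay).
by rewrite (negbTE nLyx) orbF.
Qed.

Lemma leL_trans x y z : leL x y -> leL y z -> leL x z.
Proof.
rewrite /leL => /orP[/eqP -> // | Lxy] /orP[/eqP <- | /(L_trans Lxy) ->];
  by rewrite ?Lxy orbT.
Qed.

Lemma leL_nL x y : leL x y -> ~~ L y x.
Proof. by case/orP => [/eqP -> | /L_asym]; rewrite ?L_irr. Qed.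

Lemma final_segment_above a : final_segment (above a).
Proof.
split=> [x /andP[] // | x y /andP[_ nLxa] Ay Lxy]; rewrite /above Ay.
by apply: contra nLxa; apply: L_trans.
Qed.

Lemma above_self a : A a -> above a a.
Proof. by rewrite /above L_irr andbT. Qed.

Lemma above_sub C x z : final_segment C -> C x -> above x z -> C z.
Proof.
case=> CA Cup Cx /andP[Az /(leL_total (CA _ Cx) Az)].
by case/orP=> [/eqP <- // | /(Cup _ _ Cx Az)].
Qed.

Lemma final_segment_total C C' : final_segment C -> final_segment C' ->
  (forall x, C x -> C' x) \/ (forall x, C' x -> C x).
Proof.
move=> [CA Cup] [C'A C'up].
case: (classic (exists2 x, C x & ~~ C' x)) => [[x Cx nC'x] | noCx]; last first.
  by left=> x Cx; apply/negPn/negP => nC'x; apply: noCx; exists x.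
right=> y C'y; apply: contraT => nCy.
have /(L_total (CA _ Cx) (C'A _ C'y)) : x != y by apply: contraNneq nCy => <-.
case/orP=> [/(Cup _ _ Cx (C'A _ C'y)) | /(C'up _ _ C'y (CA _ Cx))].
- by move=> Cy; case/negP: nCy.
- by move=> C'x; case/negP: nC'x.
Qed.

Lemma segment_path_false C i : final_segment C -> spath C i = false ->
  A i /\ forall j, j <= i -> spath C j = label_bit i j.
Proof.
case=> CA Cup /negbFE/andP[Ci /allP Cmin]; have Ai := CA _ Ci.
split=> // j Hj; apply: segment_path_ext => k /leq_trans/(_ Hj).
rewrite leq_eqVlt => /orP[/eqP -> | Hki]; first by rewrite Ci above_self.
have Cmin_k : C k -> ~~ L k i by apply/implyP/Cmin; rewrite mem_iota.
apply/idP/andP => [Ck | [Ak /(leL_total Ai Ak)]]; first by rewrite (CA _ Ck) Cmin_k.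
by rewrite /leL (gtn_eqF Hki) => /(Cup _ _ Ci Ak).
Qed.

Lemma segment_path_lexlt C C' : final_segment C -> final_segment C' ->
  (forall x, C' x -> C x) -> (exists x, C x && ~~ C' x) -> lexlt (spath C) (spath C').
Proof.
move=> [CA Cup] [C'A C'up] sub ex; case: (ex_minnP ex) => n /andP[Cn nC'n] n_min.
have agree k : k < n -> C k = C' k.
  move=> Hk; apply/idP/idP => [Ck | /sub //]; apply: contraT => nC'k.
  by have := n_min k; rewrite Ck nC'k leqNgt Hk => /(_ isT).
exists n; split; last split.
- by move=> m Hm; apply: segment_path_ext => k Hk; apply: agree (leq_ltn_trans Hk Hm).
- rewrite /segment_path Cn /=; apply/negbF/allP => k; rewrite mem_iota => /andP[_ Hk].
  apply/implyP => Ck; apply: contra nC'n => Lkn.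
  by apply: C'up (CA _ Cn) Lkn; rewrite -agree.
- by rewrite /segment_path (negbTE nC'n).
Qed.

Lemma segment_path_lexltE C C' : final_segment C -> final_segment C' ->
  lexlt (spath C) (spath C') <-> (forall x, C' x -> C x) /\ exists x, C x && ~~ C' x.
Proof.
move=> segC segC'; split=> [lt_CC' | [sub ex]]; last exact: segment_path_lexlt.
have neq : ~ C =1 C'.
  by move/(eq_segment_path L) => eqCC'; move: lt_CC'; rewrite eqCC'; apply: lexlt_irr.
have [sub | sub] := final_segment_total segC segC'; last first.
  split=> //; apply: NNPP => noex; apply: neq => x; apply/idP/idP => [Cx | /sub //].
  by apply/negPn/negP => nC'x; apply: noex; exists x; rewrite Cx.
exfalso; case: (classic (exists x, C' x && ~~ C x)) => [ex | noex].
  exact: lexlt_asym lt_CC' (segment_path_lexlt _ _ sub ex).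
apply: neq => x; apply/idP/idP => [/sub // | C'x].
by apply/negPn/negP => nCx; apply: noex; exists x; rewrite C'x.
Qed.

Lemma segment_path_inj C C' : final_segment C -> final_segment C' ->
  spath C = spath C' -> C =1 C'.
Proof.
move=> segC segC' eqCC' x; apply: NNPP => neq.
have [sub | sub] := final_segment_total segC segC'.
- have : lexlt (spath C') (spath C).
    apply: segment_path_lexlt => //; exists x.
    by move: neq; case: (C x) (sub x) => [->|]; case: (C' x).
  by rewrite eqCC'; apply: lexlt_irr.
- have : lexlt (spath C) (spath C').
    apply: segment_path_lexlt => //; exists x.
    by move: neq; case: (C' x) (sub x) => [->|]; case: (C x).
  by rewrite eqCC'; apply: lexlt_irr.
Qed.

Lemma segment_path_above a : A a -> spath (above a) = ext1 (label a).
Proof.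
move=> Aa; apply: functional_extensionality => n.
rewrite /ext1 /label size_mkseq; case: ltnP => [an | na]; first by rewrite nth_mkseq.
apply/negP => /andP[/andP[An nLna] /allP/(_ a)].
rewrite mem_iota na above_self //= => /(_ isT) nLan.
by move: (L_total An Aa (negbT (gtn_eqF na))); rewrite (negbTE nLna) (negbTE nLan).
Qed.

Lemma body_segment_path C : final_segment C -> body tree (spath C).
Proof.
move=> segC n; apply/allP => i; rewrite size_mkseq mem_iota => /andP[_ Hi].
rewrite nth_mkseq //; case Ci : (spath C i) => //=.
have [Ai path_i] := segment_path_false segC Ci; rewrite Ai /=.
apply/eqP; rewrite /label /mkseq -map_take take_iota (minn_idPl Hi).
apply/eq_in_map => j.
by rewrite mem_iota ltnS => /andP[_ /path_i].
Qed.

Lemma label_in_tree a : tree (label a).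
Proof. exact: body_segment_path (final_segment_above a) a.+1. Qed.

Lemma body_label_path a : A a -> body tree (ext1 (label a)).
Proof.
by move=> Aa; rewrite -segment_path_above //; apply/body_segment_path/final_segment_above.
Qed.

Lemma label_tree_last_false s : tree s ->
  (s != [::] /\ last true s = false) <-> exists a, A a /\ s = label a.
Proof.
move=> Ts; split=> [[s_nil s_last] | [a [Aa ->]]].
- have s_pos : 0 < size s by rewrite lt0n size_eq0.
  have /allP/(_ (size s).-1) := Ts; rewrite mem_iota add0n ltn_predL s_pos nth_last s_last.
  case/(_ isT)/andP=> Ai; rewrite prednK // take_size => /eqP s_label.
  by exists (size s).-1.
- split; first by rewrite -size_eq0 size_mkseq.
  rewrite -nth_last size_mkseq nth_mkseq //= /label_bit /segment_path above_self //=.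
  by apply/negbF/allP => k _; apply/implyP => /andP[].
Qed.

Lemma label_lexlt a b : A a -> A b -> L a b <-> lexlt (ext1 (label a)) (ext1 (label b)).
Proof.
move=> Aa Ab; rewrite -!segment_path_above //.
rewrite (segment_path_lexltE (final_segment_above a) (final_segment_above b)).
split=> [Lab | [_ [x]]].
- split; first by move=> x /andP[Ax nLxb]; rewrite /above Ax; apply: contra nLxb => /L_trans; apply.
  by exists a; rewrite above_self //= /above Aa Lab.
- case/andP=> /andP[Ax nLxa]; rewrite /above Ax negbK /= => Lxb.
  have /(L_total Aa Ab) : a != b by apply: contraNneq nLxa => ->.
  by case/orP=> // /(L_trans Lxb) Lxa; case/negP: nLxa.
Qed.

Lemma label_path_inj a b : A a -> A b -> ext1 (label a) = ext1 (label b) -> a = b.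
Proof.
move=> Aa Ab eq_ab; apply/eqP; apply: contraT => /(L_total Aa Ab).
by case/orP=> [/(label_lexlt Aa Ab) | /(label_lexlt Ab Aa)]; rewrite eq_ab => /lexlt_irr.
Qed.

Lemma body_zeros_descend X i j : body tree X -> X i = false -> X j = false ->
  i <= j -> leL j i.
Proof.
move=> bodyX Xi Xj; rewrite leq_eqVlt => /orP[/eqP -> | lt_ij]; first by rewrite /leL eqxx.
have [Aj path_j] := body_label_tree_false bodyX Xj.
move: (path_j i (ltnW lt_ij)); rewrite Xi => /esym/negbFE/andP[/andP[Ai nLij] _].
exact: leL_total.
Qed.

Lemma body_last_zero X a : body tree X -> X a = false ->
  (forall i, X i = false -> i <= a) -> X = ext1 (label a).
Proof.
move=> bodyX Xa a_max; have [Aa path_a] := body_label_tree_false bodyX Xa.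
apply: functional_extensionality => n; rewrite /ext1 size_mkseq ltnS.
case: leqP => [le_na | lt_an]; first by rewrite nth_mkseq ?path_a.
by apply: contraTT lt_an => /negbTE/a_max; rewrite leqNgt.
Qed.

Definition zero_segment (X : nat -> bool) : pred nat :=
  fun x => propb (A x /\ exists2 i, X i = false & leL i x).

Lemma final_segment_zero_segment X : final_segment (zero_segment X).
Proof.
split=> [x /propbP[] // | x y /propbP[_ [i Xi lix]] Ay Lxy].
by apply/propbP; split=> //; exists i => //; apply: leL_trans lix _; rewrite /leL Lxy orbT.
Qed.

Lemma above_zero_segment X i k : A i -> X i = false -> above i k -> zero_segment X k.
Proof.
by move=> Ai Xi /andP[Ak nLki]; apply/propbP; split=> //; exists i => //; apply: leL_total.
Qed.

Lemma zero_segment_above X i j k : body tree X -> X i = false -> X j = false ->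
  j <= i -> A k -> leL j k -> above i k.
Proof.
move=> bodyX Xi Xj le_ji Ak ljk; rewrite /above Ak; apply: leL_nL.
exact: leL_trans (body_zeros_descend bodyX Xj Xi le_ji) ljk.
Qed.

Lemma segment_path_zero_segment X : body tree X -> spath (zero_segment X) = X.
Proof.
move=> bodyX; case: (classic (exists i, ~~ X i)) => [has_zero | no_zero]; last first.
  have X_true i : X i by apply/negPn/negP => Xi; apply: no_zero; exists i.
  apply: functional_extensionality => n; rewrite X_true.
  by apply/negP => /andP[/propbP[_ [i]]]; rewrite X_true.
case: (classic (exists N, forall i, ~~ X i -> i <= N)) => [[N bounded] | unbounded].
  have [a /negbTE Xa a_max] := ex_maxnP has_zero bounded.
  have [Aa _] := body_label_tree_false bodyX Xa.
  have zero_seg_a : zero_segment X =1 above a.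
    move=> k; apply/idP/idP => [/propbP[Ak [j Xj]] | /(above_zero_segment Aa Xa) //].
    exact: zero_segment_above bodyX Xa Xj (a_max _ (negbT Xj)) Ak.
  rewrite (eq_segment_path _ zero_seg_a) segment_path_above //.
  by rewrite (body_last_zero bodyX Xa) // => i /negbT/a_max.
apply: functional_extensionality => n.
have [N witnessed] : exists N, forall k, k <= n -> zero_segment X k ->
    exists2 j, j <= N & X j = false /\ leL j k.
  by apply: finite_witnesses => x /propbP[_ [i Xi lix]]; exists i.
have [i Xi le_i] : exists2 i, X i = false & maxn N n <= i.
  apply: NNPP => no_i; apply: unbounded; exists (maxn N n) => i /negbTE Xi.
  by rewrite leqNgt; apply/negP => lt_i; apply: no_i; exists i => //; apply: ltnW.
have [Ai path_i] := body_label_tree_false bodyX Xi.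
rewrite path_i ?(leq_trans (leq_maxr _ _) le_i) //.
apply: segment_path_ext => k le_kn; apply/idP/idP => [Ck | /(above_zero_segment Ai Xi) //].
have [j le_jN [Xj ljk]] := witnessed k le_kn Ck.
apply: zero_segment_above bodyX Xi Xj _ _ ljk; last by case/propbP: Ck.
exact: leq_trans le_jN (leq_trans (leq_maxl _ _) le_i).
Qed.

Lemma body_tree_segment X : body tree X -> exists2 C, final_segment C & X = spath C.
Proof.
move=> bodyX; exists (zero_segment X); first exact: final_segment_zero_segment.
by rewrite segment_path_zero_segment.
Qed.

Lemma zero_segment_path C : final_segment C -> zero_segment (spath C) =1 C.
Proof.
move=> segC; apply: (segment_path_inj (final_segment_zero_segment _) segC).
exact/segment_path_zero_segment/body_segment_path.
Qed.

Lemma label_path_has_successor a : A a -> has_successor_in (body tree) (ext1 (label a)).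
Proof.
move=> Aa; rewrite -segment_path_above //.
have segLa : final_segment (L a).
  split=> [x /L_dom/andP[] // | x y Lax _]; exact: L_trans.
have sub_La : forall x, L a x -> above a x.
  by move=> x Lax; have /andP[_ Ax] := L_dom Lax; rewrite /above Ax L_asym.
exists (spath (L a)); split; first exact: body_segment_path.
split=> [|[Z [/body_tree_segment[D segD ->] [lt_aD lt_Da]]]].
  apply: segment_path_lexlt (final_segment_above a) segLa sub_La _.
  by exists a; rewrite above_self // L_irr.
move: lt_aD lt_Da.
rewrite (segment_path_lexltE (final_segment_above a) segD) (segment_path_lexltE segD segLa).
move=> [D_a [x /andP[/andP[Ax nLxa] nDx]]] [_ [y /andP[Dy nLay]]].
have Da : D a.
  have /andP[Ay nLya] := D_a _ Dy; suff <- : y = a by [].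
  by apply/eqP; apply: contraNT nLay => /(L_total Ay Aa); rewrite (negbTE nLya).
by move: nDx; rewrite (above_sub segD Da) // /above Ax.
Qed.

Lemma successor_label_path X : body tree X -> has_successor_in (body tree) X ->
  exists a, A a /\ X = ext1 (label a).
Proof.
case/body_tree_segment=> C segC -> [_ [/body_tree_segment[D segD ->] [lt_CD no_between]]].
move: lt_CD; rewrite (segment_path_lexltE segC segD) => -[D_C [x /andP[Cx nDx]]].
have Ax := segC.1 _ Cx.
have x_least y : C y -> ~~ L y x.
  move=> Cy; apply/negP => Lyx; apply: no_between; exists (spath (above x)).
  split; first exact/body_segment_path/final_segment_above.
  rewrite (segment_path_lexltE segC (final_segment_above x)).
  rewrite (segment_path_lexltE (final_segment_above x) segD).
  split; split.
  - by move=> z; apply: above_sub segC Cx.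
  - by exists y; rewrite Cy /above Lyx andbF.
  - move=> z Dz; rewrite /above (segD.1 _ Dz); apply: contra nDx => Lzx.
    exact: segD.2 _ _ Dz Ax Lzx.
  - by exists x; rewrite above_self.
exists x; split=> //; rewrite -segment_path_above //; apply: eq_segment_path => z.
apply/idP/idP => [Cz | /(above_sub segC Cx) //].
by rewrite /above (segC.1 _ Cz) x_least.
Qed.
End FinalSegments.

(** * Invariance under isomorphism *)

Section Transport.
Variables (A1 : pred nat) (L1 : rel nat) (A2 : pred nat) (L2 : rel nat).
Hypotheses (HL1 : strict_total A1 L1) (HL2 : strict_total A2 L2).
Variable f : nat -> nat.
Hypothesis f_A : forall x, A1 x -> A2 (f x).
Hypothesis f_onto : forall y, A2 y -> exists x, A1 x /\ f x = y.
Hypothesis f_L : forall x y, A1 x -> A1 y -> (L1 x y <-> L2 (f x) (f y)).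

Lemma f_inj x y : A1 x -> A1 y -> f x = f y -> x = y.
Proof.
move=> Ax Ay fxy; apply/eqP; apply: contraT => /(L_total HL1 Ax Ay).
by case/orP=> [/(f_L Ax Ay) | /(f_L Ay Ax)]; rewrite fxy (L_irr HL2).
Qed.

Definition image_segment (C : pred nat) : pred nat :=
  fun y => propb (exists2 x, C x & f x = y).

Lemma image_segmentP (C : pred nat) y : reflect (exists2 x, C x & f x = y) (image_segment C y).
Proof. exact: propbP. Qed.

Definition preimage_segment (C : pred nat) : pred nat := fun x => A1 x && C (f x).

Lemma image_segment_f C x :
  final_segment A1 L1 C -> A1 x -> image_segment C (f x) = C x.
Proof.
move=> segC Ax; apply/image_segmentP/idP => [[x' Cx' /f_inj <-] // | Cx]; last by exists x.
exact: segC.1.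
Qed.

Lemma final_segment_image C :
  final_segment A1 L1 C -> final_segment A2 L2 (image_segment C).
Proof.
move=> segC; split=> [y /image_segmentP[x Cx <-] | y y' /image_segmentP[x Cx <-] Ay' Ly].
  exact/f_A/segC.1.
have [x' [Ax' fx']] := f_onto Ay'; have Ax := segC.1 _ Cx.
rewrite -fx' in Ly *; rewrite image_segment_f //.
exact: segC.2 _ _ Cx Ax' ((f_L Ax Ax').2 Ly).
Qed.

Lemma final_segment_preimage C :
  final_segment A2 L2 C -> final_segment A1 L1 (preimage_segment C).
Proof.
move=> segC; split=> [x /andP[] // | x y /andP[Ax Cfx] Ay Lxy].
by rewrite /preimage_segment Ay (segC.2 _ _ Cfx (f_A Ay)) //; apply/f_L.
Qed.

Lemma image_preimage_segment C :
  final_segment A2 L2 C -> image_segment (preimage_segment C) =1 C.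
Proof.
move=> segC y; apply/image_segmentP/idP => [[x /andP[_ Cfx] <-] // | Cy].
by have [x [Ax fx]] := f_onto (segC.1 _ Cy); exists x => //; rewrite /preimage_segment Ax fx.
Qed.

Definition transport_path (X : nat -> bool) : nat -> bool :=
  segment_path L2 (image_segment (zero_segment A1 L1 X)).

Lemma transport_segment_path C : final_segment A1 L1 C ->
  transport_path (segment_path L1 C) = segment_path L2 (image_segment C).
Proof.
move=> segC; apply: eq_segment_path => y.
apply/image_segmentP/image_segmentP => -[x Cx fx]; exists x => //.
  by rewrite -(zero_segment_path HL1 segC).
by rewrite (zero_segment_path HL1 segC).
Qed.

Lemma image_segment_lexlt C D : final_segment A1 L1 C -> final_segment A1 L1 D ->
  lexlt (segment_path L1 C) (segment_path L1 D) <->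
  lexlt (segment_path L2 (image_segment C)) (segment_path L2 (image_segment D)).
Proof.
move=> segC segD; rewrite (segment_path_lexltE HL1 segC segD).
rewrite (segment_path_lexltE HL2 (final_segment_image segC) (final_segment_image segD)).
split=> -[sub [x /andP[Cx nDx]]].
- split=> [y /image_segmentP[x' Dx' <-] | ]; first by rewrite image_segment_f ?(segD.1 _ Dx') ?sub.
  by exists (f x); rewrite !image_segment_f ?(segC.1 _ Cx) ?Cx.
- split=> [y Dy | ].
    by rewrite -(image_segment_f segC) ?sub ?image_segment_f ?(segD.1 _ Dy).
  case/image_segmentP: Cx nDx => x' Cx' <- nDx; exists x'.
  by rewrite Cx' -(image_segment_f segD) ?(segC.1 _ Cx').
Qed.

Lemma transport_order_iso :
  order_iso (body (label_tree A1 L1)) lexlt (body (label_tree A2 L2)) lexlt.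
Proof.
exists transport_path; split; last split.
- move=> _ /(body_tree_segment HL1)[C segC ->]; rewrite transport_segment_path //.
  exact/(body_segment_path HL2)/final_segment_image.
- move=> _ /(body_tree_segment HL2)[C segC ->].
  have segC' := final_segment_preimage segC.
  exists (segment_path L1 (preimage_segment C)); split; first exact: body_segment_path.
  by rewrite transport_segment_path //; apply/eq_segment_path/image_preimage_segment.
- move=> _ _ /(body_tree_segment HL1)[C segC ->] /(body_tree_segment HL1)[D segD ->].
  by rewrite !transport_segment_path //; apply: image_segment_lexlt.
Qed.
End Transport.

Lemma order_iso_has_successor (P Q : (nat -> bool) -> Prop) h :
  (forall X, P X -> Q (h X)) -> (forall Y, Q Y -> exists X, P X /\ h X = Y) ->
  (forall X Y, P X -> P Y -> (lexlt X Y <-> lexlt (h X) (h Y))) ->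
  forall X, P X -> has_successor_in P X <-> has_successor_in Q (h X).
Proof.
move=> hP h_onto h_lt X PX; split.
- case=> Y [PY [lt_XY no_between]]; exists (h Y); split; first exact: hP.
  split; first exact/(h_lt _ _ PX PY).
  case=> _ [/h_onto[Z [PZ <-]] [lt_XZ lt_ZY]]; apply: no_between.
  by exists Z; split=> //; split; [apply/(h_lt _ _ PX PZ) | apply/(h_lt _ _ PZ PY)].
- case=> _ [/h_onto[Y [PY <-]] [lt_XY no_between]]; exists Y; split=> //.
  split; first exact/(h_lt _ _ PX PY).
  case=> Z [PZ [lt_XZ lt_ZY]]; apply: no_between.
  exists (h Z); split; first exact: hP.
  by split; [apply/(h_lt _ _ PX PZ) | apply/(h_lt _ _ PZ PY)].
Qed.

Lemma order_iso_labels A1 L1 A2 L2 : strict_total A1 L1 -> strict_total A2 L2 ->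
  order_iso (body (label_tree A1 L1)) lexlt (body (label_tree A2 L2)) lexlt ->
  order_iso (fun a => A1 a) (fun a b => L1 a b) (fun b => A2 b) (fun a b => L2 a b).
Proof.
move=> HL1 HL2 [h [hP [h_onto h_lt]]].
have h_succ := order_iso_has_successor hP h_onto h_lt.
have h_label a : exists b, A1 a -> A2 b /\ h (ext1 (label A1 L1 a)) = ext1 (label A2 L2 b).
  case: (classic (A1 a)) => [A1a | ?]; last by exists 0.
  have body_a := body_label_path HL1 A1a.
  have [b [A2b ->]] := successor_label_path HL2 (hP _ body_a)
    ((h_succ _ body_a).1 (label_path_has_successor HL1 A1a)).
  by exists b.
have [g gP] := choice _ h_label.
exists g; split; last split.
- by move=> a /gP[].
- move=> b A2b; have body_b := body_label_path HL2 A2b.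
  have [X [bodyX hX]] := h_onto _ body_b.
  have [a [A1a Xa]] : exists a, A1 a /\ X = ext1 (label A1 L1 a).
    apply: (successor_label_path HL1 bodyX); apply/(h_succ _ bodyX); rewrite hX.
    exact: label_path_has_successor.
  exists a; split=> //; have [A2g hg] := gP _ A1a.
  by apply: (label_path_inj HL2 A2g A2b); rewrite -hg -Xa.
- move=> a b A1a A1b; have [A2ga hga] := gP _ A1a; have [A2gb hgb] := gP _ A1b.
  rewrite (label_lexlt HL1 A1a A1b) (label_lexlt HL2 A2ga A2gb) -hga -hgb.
  exact: h_lt (body_label_path HL1 A1a) (body_label_path HL1 A1b).
Qed.

Lemma order_iso_label_trees A1 L1 A2 L2 : strict_total A1 L1 -> strict_total A2 L2 ->
  order_iso (fun a => A1 a) (fun a b => L1 a b) (fun b => A2 b) (fun a b => L2 a b) <->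
  order_iso (body (label_tree A1 L1)) lexlt (body (label_tree A2 L2)) lexlt.
Proof.
move=> HL1 HL2; split; last exact: order_iso_labels.
by case=> f [f_A [f_onto f_L]]; apply: transport_order_iso f_L.
Qed.

(** * Computing the tree and the labels *)

Lemma code_rcons s b : code_str (rcons s b) = code_str s + 2 ^ size s * (1 + b).
Proof.
elim: s => [|x s IH] /=; first by case: b.
by rewrite IH doubleD -addnA [_ + (1 + x)]addnC addnA expnS mul2n doubleMl.
Qed.

Lemma code_mkseq (f : nat -> bool) n :
  code_str (mkseq f n) = nat_rect (fun _ => nat) 0 (fun i z => z + 2 ^ i * (1 + f i)) n.
Proof. by elim: n => // n IH; rewrite mkseqS code_rcons size_mkseq IH. Qed.

Lemma size_le_code s : size s <= code_str s.
Proof.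
elim: s => //= b s IH.
by rewrite -addn1 leq_add ?leq_addr // -addnn (leq_trans IH) ?leq_addr.
Qed.

Definition code_tail (c : nat) : nat := (c.-1)./2.

Lemma code_tail_cons b s : code_tail (code_str (b :: s)) = code_str s.
Proof. by rewrite /code_tail /= add1n addnS /= addnC half_bit_double. Qed.

Lemma iter_code_tail i s : iter i code_tail (code_str s) = code_str (drop i s).
Proof.
elim: i s => [|i IH] s; first by rewrite drop0.
by rewrite iterSr; case: s => [|b s]; [apply: (IH [::]) | rewrite code_tail_cons IH].
Qed.

Lemma odd_iter_code_tail s i :
  odd (iter i code_tail (code_str s)) = (i < size s) && ~~ nth true s i.
Proof.
rewrite iter_code_tail; case: ltnP => [lt_is | /drop_oversize -> //].
by rewrite (drop_nth true lt_is) /= oddD odd_double; case: (nth true s i).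
Qed.

Definition tree_check (A : pred nat) (L : rel nat) (c : nat) : bool :=
  all (fun i => all (fun j => odd (iter i code_tail c) ==>
    A i && ((~~ odd (iter j code_tail c)) == label_bit A L i j)) (iota 0 i.+1)) (iota 0 c).

Lemma tree_check_code A L s : tree_check A L (code_str s) = label_tree A L s.
Proof.
rewrite /tree_check.
have -> : iota 0 (code_str s) = iota 0 (size s) ++ iota (size s) (code_str s - size s).
  by rewrite -iotaD subnKC ?size_le_code.
rewrite all_cat; set beyond := all _ (iota (size s) _).
have -> : beyond.
  apply/allP => i; rewrite mem_iota => /andP[le_si _]; apply/allP => j _.
  by rewrite odd_iter_code_tail ltnNge le_si.
rewrite andbT; apply: eq_in_all => i; rewrite mem_iota add0n => /andP[_ lt_is].
rewrite odd_iter_code_tail lt_is andTb; case: (nth true s i); first by apply/allP.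
rewrite orFb /label (take_eq_mkseq true) //; case: (A i); last by [].
apply: eq_in_all => j; rewrite mem_iota ltnS => /andP[_ le_ji].
by rewrite odd_iter_code_tail (leq_ltn_trans le_ji lt_is) negbK.
Qed.

Definition oracle_set (o : nat -> bool) : pred nat := fun x => o x.*2.
Definition oracle_rel (o : nat -> bool) : rel nat := fun x y => o (cpair x y).*2.+1.

Definition InSet e := Query (Add e e).
Lemma run_InSet o e xs : run o (InSet e) xs = oracle_set o (run o e xs).
Proof. by rewrite run_Query run_Add addnn. Qed.

Definition InRel e1 e2 := Query (Succ (Add (Pair e1 e2) (Pair e1 e2))).
Lemma run_InRel o e1 e2 xs :
  run o (InRel e1 e2) xs = oracle_rel o (run o e1 xs) (run o e2 xs).
Proof. by rewrite run_Query run_Succ run_Add run_Pair addnn. Qed.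
Opaque InSet InRel.

(* The body sees [a; n]; inside [AllBelow] this becomes [k; _; a; n]. *)
Definition LabelBit e1 e2 := rf_comp
  (Not (And (And (InSet (Arg 1)) (Not (InRel (Arg 1) (Arg 0))))
     (AllBelow 2 (Arg 1) (Imp (And (InSet (Arg 0)) (Not (InRel (Arg 0) (Arg 2))))
                              (Not (InRel (Arg 0) (Arg 3)))))))
  [:: e1; e2].
Lemma run_LabelBit o e1 e2 xs : run o (LabelBit e1 e2) xs =
  label_bit (oracle_set o) (oracle_rel o) (run o e1 xs) (run o e2 xs).
Proof.
have run_in_above x a ys : run o (And (InSet x) (Not (InRel x a))) ys =
    above (oracle_set o) (oracle_rel o) (run o a ys) (run o x ys).
  by rewrite /above; apply: run_And; [rewrite run_InSet | apply: run_Not; rewrite run_InRel].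
apply: run_Not; apply: run_And; first exact: run_in_above.
apply: run_AllBelow => // k z; apply: run_Imp; first exact: run_in_above.
by apply: run_Not; rewrite run_InRel.
Qed.
Opaque LabelBit.

Definition CodeTail e1 e2 := rf_comp (Rec 2 (Arg 0) (Arg 1) (Half (Pred (Arg 1)))) [:: e1; e2].
Lemma run_CodeTail o e1 e2 xs :
  run o (CodeTail e1 e2) xs = iter (run o e1 xs) code_tail (run o e2 xs).
Proof.
rewrite /= run_Rec // !run_Arg /=.
by elim: (run o e1 xs) => //= n ->; rewrite run_Half run_Pred run_Arg.
Qed.
Opaque CodeTail.

(* The outer loop sees [i; _; c], the inner one [j; _; i; _; c]. *)
Definition tree_prog := AllBelow 1 (Arg 0) (AllBelow 3 (Succ (Arg 0))
  (Imp (Odd (CodeTail (Arg 2) (Arg 4)))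
       (And (InSet (Arg 2))
            (Eqn (Not (Odd (CodeTail (Arg 0) (Arg 4)))) (LabelBit (Arg 2) (Arg 0)))))).

Lemma run_tree_prog o s :
  run o tree_prog [:: code_str s] = label_tree (oracle_set o) (oracle_rel o) s.
Proof.
rewrite -tree_check_code; apply: run_AllBelow => // i z; apply: run_AllBelow => // j w.
apply: run_Imp; first by rewrite run_Odd run_CodeTail.
apply: run_And; first by rewrite run_InSet.
rewrite run_Eqn run_LabelBit (run_Not (run_Odd _ _ _)) run_CodeTail !run_Arg /=.
by case: (odd _); case: (label_bit _ _ _ _).
Qed.

Definition label_prog := Rec 1 (Succ (Arg 0)) (Const 0)
  (Add (Arg 1) (Mul (Pow2 (Arg 0)) (Succ (LabelBit (Arg 2) (Arg 0))))).

Lemma run_label_prog o a :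
  run o label_prog [:: a] = code_str (label (oracle_set o) (oracle_rel o) a).
Proof.
rewrite run_Rec // run_Succ run_Arg run_Const /label code_mkseq.
elim: (nth 0 [:: a] 0).+1 => // n IH; rewrite [LHS]/= IH [RHS]/=.
by rewrite run_Add run_Mul run_Pow2 run_Succ run_LabelBit !run_Arg /= add1n.
Qed.

Lemma prim_tree_prog : prim 1 tree_prog.
Proof. by vm_compute. Qed.

Lemma prim_label_prog : prim 1 label_prog.
Proof. by vm_compute. Qed.


Lemma presents_oracle o A lt : presents o A lt ->
  oracle_set o = A /\ oracle_rel o = rel_on A lt.
Proof.
case=> oA oL; split; first by apply: functional_extensionality => x; apply: oA.
by do 2 apply: functional_extensionality => ?; apply: oL.
Qed.

Lemma strict_total_rel_on A lt : linear_order A lt -> strict_total A (rel_on A lt).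
Proof.
case=> irr [tr tot]; split.
- by move=> x y /and3P[-> ->].
- by move=> x; apply/negbTE/negP => /and3P[Ax _]; apply/negP/irr.
- move=> y x z /and3P[Ax Ay Lxy] /and3P[_ Az Lyz]; rewrite /rel_on Ax Az.
  exact: tr Lxy Lyz.
- by move=> x y Ax Ay; rewrite /rel_on Ax Ay; apply: tot.
Qed.

Lemma tree_of_tree_prog o A lt : presents o A lt ->
  tree_of tree_prog o = (fun s => label_tree A (rel_on A lt) s).
Proof.
case/presents_oracle=> oA oL; apply: functional_extensionality => s.
apply: propositional_extensionality.
by rewrite /tree_of evalE ?prim_tree_prog // run_tree_prog oA oL; case: label_tree.
Qed.

Lemma lin_iso_rel_on A1 lt1 A2 lt2 : lin_iso A1 lt1 A2 lt2 <->
  order_iso (fun a => A1 a) (fun a b => rel_on A1 lt1 a b)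
            (fun b => A2 b) (fun a b => rel_on A2 lt2 a b).
Proof.
split; case=> f [fA [f_onto fL]]; exists f; split=> //; split=> // x y Ax Ay;
  by move: (fL x y Ax Ay); rewrite /rel_on Ax Ay (fA _ Ax) (fA _ Ay).
Qed.

Theorem lemma4p3 :
  exists eT el : rf,
    (forall (o : nat -> bool) (A : pred nat) (lt : rel nat),
      presents o A lt -> linear_order A lt ->
      exists (T : pred (seq bool)) (l : nat -> seq bool),
        (forall s, eval o eT [:: code_str s] (nat_of_bool (T s))) /\
        (forall a, A a -> eval o el [:: a] (code_str (l a))) /\
        is_tree T /\
        (forall a, A a -> T (l a)) /\
        (forall s, T s ->
           ((s != [::] /\ last true s = false) <-> exists a, A a /\ s = l a)) /\
        (forall a, A a -> body T (ext1 (l a))) /\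
        (forall a b, A a -> A b -> (lt a b <-> lexlt (ext1 (l a)) (ext1 (l b)))) /\
        (forall X, body T X ->
           ((exists a, A a /\ X = ext1 (l a)) <-> has_successor_in (body T) X))) /\
    (forall (o1 : nat -> bool) (A1 : pred nat) (lt1 : rel nat)
            (o2 : nat -> bool) (A2 : pred nat) (lt2 : rel nat),
      presents o1 A1 lt1 -> linear_order A1 lt1 ->
      presents o2 A2 lt2 -> linear_order A2 lt2 ->
      (lin_iso A1 lt1 A2 lt2 ->
         order_iso (body (tree_of eT o1)) lexlt (body (tree_of eT o2)) lexlt) /\
      (lin_iso A1 lt1 A2 lt2 <->
         order_iso (body (tree_of eT o1)) lexlt (body (tree_of eT o2)) lexlt)).
Proof.
exists tree_prog, label_prog; split.
- move=> o A lt pr lo; have [oA oL] := presents_oracle pr.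
  have HL := strict_total_rel_on lo.
  exists (label_tree A (rel_on A lt)), (label A (rel_on A lt)).
  split; [|split; [|split; [|split; [|split; [|split; [|split]]]]]].
  + by move=> s; rewrite -oL -oA -run_tree_prog; apply/eval_run/prim_tree_prog.
  + by move=> a _; rewrite -oL -oA -run_label_prog; apply/eval_run/prim_label_prog.
  + exact: label_tree_is_tree.
  + by move=> a _; apply: label_in_tree.
  + by move=> s; apply: label_tree_last_false.
  + by move=> a; apply: body_label_path.
  + by move=> a b Aa Ab; rewrite -(label_lexlt HL Aa Ab) /rel_on Aa Ab.
  + move=> X bodyX; split; last exact: successor_label_path.
    by case=> a [Aa ->]; apply: label_path_has_successor.
- move=> o1 A1 lt1 o2 A2 lt2 pr1 lo1 pr2 lo2.
  rewrite (tree_of_tree_prog pr1) (tree_of_tree_prog pr2) lin_iso_rel_on.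
  rewrite (order_iso_label_trees (strict_total_rel_on lo1) (strict_total_rel_on lo2)).
  by split.
Qed.
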